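(* Let $\vec a\in\mathbb R^n_{>0}$ have rationally independent components, and suppose $\vec v\in\mathbb Z^n\setminus\mathbb Z^n_{\le0}$ satisfies $\mathfrak o^{\vec a}_{\vec v}=\mathfrak o^{\vec a}_k$ for some $k\in\mathbb Z_{\ge1}$. Then each component of $\vec v$ is at most the corresponding component of $\Gamma^{\vec a}_k$.
   Context: The Reeb orbits of $\partial E(\vec a)$ ($E(\vec a)=\{\pi\sum|z_j|^2/a_j\le1\}$, contact form $\lambda_{std}|$) are the iterates $\nu_j^m$ of the simple orbits $\nu_j$ on the coordinate axes, with action $ma_j$; $\mathfrak o^{\vec a}_k$ is the orbit of $k$-th smallest action. For $\vec v\in\mathbb Z^n\setminus\mathbb Z^n_{\le0}$, $\mathfrak o^{\vec a}_{\vec v}:=\nu_{i_M}^{v_{i_M}}$ with $i_M$ the index maximizing $a_iv_i$. $\Gamma^{\vec a}_k\in\mathbb Z^n_{\ge0}$ is the unique tuple $(w_1,\dots,w_n)$ with $\sum w_i=k$ minimizing $\max_i a_iw_i$. *)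

From HB Require Import structures.
From mathcomp Require Import all_boot all_order all_algebra.
From mathcomp Require Import reals.
Set Implicit Arguments. Unset Strict Implicit. Unset Printing Implicit Defensive.
Import Order.TTheory GRing.Theory Num.Theory.
Local Open Scope ring_scope.

Definition rat_indep (R : realType) (n : nat) (a : 'I_n -> R) : Prop :=
  forall q : 'I_n -> rat, \sum_(i < n) ratr (q i) * a i = 0 -> forall i, q i = 0.

(* A Reeb orbit of the boundary of E(a): the iterate nu_j^m, encoded as (j, m), m >= 1. *)
Definition orbit (n : nat) := ('I_n * nat)%type.
Definition is_orbit (n : nat) (o : orbit n) : Prop := (0 < o.2)%N.
Definition action (R : realType) (n : nat) (a : 'I_n -> R) (o : orbit n) : R :=
  (o.2)%:R * a o.1.

(* o is the orbit of k-th smallest action: o is an orbit and the orbits of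
   action <= action o are exactly k distinct orbits (o included). *)
Definition is_kth_orbit (R : realType) (n : nat) (a : 'I_n -> R) (k : nat)
    (o : orbit n) : Prop :=
  is_orbit o /\
  exists s : seq (orbit n),
    [/\ uniq s, size s = k,
        (forall p, p \in s -> is_orbit p /\ action a p <= action a o) &
        (forall p, is_orbit p -> action a p <= action a o -> p \in s)].

Definition is_orbit_of_vec (R : realType) (n : nat) (a : 'I_n -> R)
    (v : 'I_n -> int) (o : orbit n) : Prop :=
  exists iM : 'I_n,
    (forall i, a i * (v i)%:~R <= a iM * (v iM)%:~R) /\
    o = (iM, `|v iM|%N).

Definition max_aw (R : realType) (n : nat) (a : 'I_n -> R) (w : 'I_n -> nat) : R :=
  \big[Num.max/0]_(i < n) (a i * (w i)%:R).
Definition is_Gamma (R : realType) (n : nat) (a : 'I_n -> R) (k : nat)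
    (w : 'I_n -> nat) : Prop :=
  (\sum_(i < n) w i)%N = k /\
  forall w' : 'I_n -> nat, (\sum_(i < n) w' i)%N = k -> max_aw a w <= max_aw a w'.

From Pilot Require Import Defs.
From HB Require Import structures.
From mathcomp Require Import all_boot all_order all_algebra.
From mathcomp Require Import reals.

Set Implicit Arguments.
Unset Strict Implicit.
Unset Printing Implicit Defensive.
Import Order.TTheory GRing.Theory Num.Theory.
Local Open Scope ring_scope.

(* Let A > 0 be the action of o = o_v.  The orbits of action at most A are the
   iterates nu_j^m with m <= u_j := floor (A / a_j), so o being the k-th orbit
   means sum_j u_j = k.  The tuple u has max_j a_j u_j <= A, hence so has
   Gamma_k, which forces Gamma_k <= u componentwise; equal sums then give
   Gamma_k = u.  Finally a_i v_i <= a_iM v_iM = A gives v_i <= u_i. *)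

Section OrbitsBelow.

Variables (R : realType) (n : nat) (a : 'I_n -> R).
Hypothesis a_pos : forall j, 0 < a j.

Definition iterates_below (A : R) (j : 'I_n) : nat := Num.truncn (A / a j).

Lemma leq_iterates_below (A : R) (j : 'I_n) (m : nat) : 0 <= A ->
  (m <= iterates_below A j)%N = (action a (j, m) <= A).
Proof.
move=> A_ge0.
rewrite truncn_ge_nat; last by rewrite divr_ge0 // ltW.
by rewrite ler_pdivlMr.
Qed.

Definition orbits_below (A : R) : seq (Defs.orbit n) :=
  [seq (j, m) | j <- enum 'I_n, m <- iota 1%N (iterates_below A j)].

Lemma orbits_below_uniq (A : R) : uniq (orbits_below A).
Proof.
apply: allpairs_uniq_dep => [|j _|[j1 m1] [j2 m2] _ _ /= [-> ->]] //.
- exact: enum_uniq.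
- exact: iota_uniq.
Qed.

Lemma mem_orbits_below (A : R) (p : Defs.orbit n) : 0 <= A ->
  p \in orbits_below A <-> is_orbit p /\ action a p <= A.
Proof.
move=> A_ge0; case: p => j m; rewrite /is_orbit /=.
rewrite -leq_iterates_below //; split.
  case/allpairsPdep=> j' [m' [_ + [-> ->]]].
  by rewrite mem_iota add1n ltnS => /andP.
move=> [m_gt0 m_le]; apply/allpairsPdep; exists j, m.
by rewrite mem_enum mem_iota m_gt0 add1n ltnS.
Qed.

Lemma size_orbits_below (A : R) :
  size (orbits_below A) = (\sum_(j < n) iterates_below A j)%N.
Proof.
rewrite size_allpairs_dep sumnE big_map enumT.
by under eq_bigr do rewrite size_iota.
Qed.

Lemma kth_orbit_sum_iterates_below (k : nat) (o : Defs.orbit n) :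
  is_kth_orbit a k o -> 0 <= action a o ->
  (\sum_(j < n) iterates_below (action a o) j)%N = k.
Proof.
move=> [_ [s [s_uniq <- s_sub sub_s]]] A_ge0.
rewrite -size_orbits_below; apply/perm_size/uniq_perm => //.
  exact: orbits_below_uniq.
move=> p; apply/idP/idP => [/(mem_orbits_below _ A_ge0) [] | /s_sub []].
  exact: sub_s.
by move=> p_orb p_le; apply/(mem_orbits_below _ A_ge0).
Qed.

Lemma Gamma_iterates_below (A : R) (k : nat) (w : 'I_n -> nat) : 0 <= A ->
  (\sum_(j < n) iterates_below A j)%N = k -> is_Gamma a k w ->
  w =1 iterates_below A.
Proof.
move=> A_ge0 sum_u [sum_w w_min].
have max_u : max_aw a (iterates_below A) <= A.
  apply/bigmax_leP; split=> // j _.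
  by rewrite mulrC -[_ * _]/(action a (j, _)) -leq_iterates_below.
have w_le_u j : (w j <= iterates_below A j)%N.
  rewrite leq_iterates_below // /action mulrC.
  by apply: le_trans (le_trans (w_min _ sum_u) max_u); apply: le_bigmax.
have /leqif_sum sum_leqif := fun j (_ : true) => leqif_eq (w_le_u j).
move: sum_leqif.2; rewrite sum_w sum_u eqxx => /esym/forallP eq_wu j.
exact/eqP/eq_wu.
Qed.

Lemma le_iterates_below (A : R) (i : 'I_n) (z : int) : 0 <= A ->
  a i * z%:~R <= A -> z <= (iterates_below A i)%:Z.
Proof.
move=> A_ge0; case: z => [m | m] a_m_le; last by [].
by rewrite lez_nat leq_iterates_below // /action mulrC.
Qed.

Lemma orbit_of_vec_action_ge (v : 'I_n -> int) (o : Defs.orbit n) :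
  (exists i, 0 < v i) -> is_orbit_of_vec a v o ->
  forall i, a i * (v i)%:~R <= action a o.
Proof.
move=> [i0 v_i0] [iM [max_iM ->]] i.
have v_iM : 0 < v iM.
  have : 0 < a iM * (v iM)%:~R.
    by apply: lt_le_trans (max_iM i0); rewrite mulr_gt0 ?ltr0z.
  by rewrite pmulr_rgt0 // ltr0z.
by rewrite /action /= natr_absz gtr0_norm // [_ * a iM]mulrC.
Qed.

End OrbitsBelow.

Theorem mainTheorem13 (R : realType) (n : nat) (a : 'I_n -> R)
  (a_pos : forall i, 0 < a i) (a_indep : rat_indep a)
  (v : 'I_n -> int) (v_notnonpos : exists i, 0 < v i)
  (k : nat) (k_ge1 : (1 <= k)%N)
  (hv : exists o, is_orbit_of_vec a v o /\ is_kth_orbit a k o) :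
  forall w : 'I_n -> nat, is_Gamma a k w -> forall i, v i <= (w i)%:Z.
Proof.
move=> w w_Gamma i; case: hv => o [o_v o_kth].
have a_v_le := orbit_of_vec_action_ge a_pos v_notnonpos o_v.
have A_ge0 : 0 <= action a o.
  case: v_notnonpos => i0 v_i0.
  by apply: le_trans (a_v_le i0); rewrite mulr_ge0 ?ler0z ?ltW.
have sum_u := kth_orbit_sum_iterates_below a_pos o_kth A_ge0.
rewrite (Gamma_iterates_below a_pos A_ge0 sum_u w_Gamma i).
exact: (le_iterates_below a_pos A_ge0 (a_v_le i)).
Qed.
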